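(* Let $R$ be a ring with identity and $a,b,c,\alpha\in R$ such that $a$ has a $(b,c)$-inverse $a^\otimes$. The following are equivalent: (i) $\alpha$ is right $(b,c)$-invertible; (ii) $\alpha$ is left annihilator $(b,c)$-invertible; (iii) $1+(\alpha-a)a^\otimes$ is right invertible; (iv) $1+a^\otimes(\alpha-a)$ is right invertible.
   Context: For $x\in R$: $xR=\{xr:r\in R\}$, $Rx=\{rx:r\in R\}$, ${}^\circ x=\{r: rx=0\}$. $a$ is $(b,c)$-invertible if there is $y\in R$ with $y\in (bRy)\cap(yRc)$, $yab=b$, $cay=c$; such $y$ is unique, denoted $a^\otimes$. $\alpha$ is right $(b,c)$-invertible if there is $y$ with $yR\subseteq bR$ and $c\alpha y=c$; left annihilator $(b,c)$-invertible if there is $y$ with ${}^\circ b\subseteq {}^\circ y$ and $c\alpha y=c$. *)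

From mathcomp Require Import all_boot all_algebra.
Set Implicit Arguments. Unset Strict Implicit. Unset Printing Implicit Defensive.
Import GRing.Theory.
Local Open Scope ring_scope.

Definition bc_inverse (R : pzRingType) (a b c y : R) : Prop :=
  (exists r : R, y = b * r * y) /\ (exists s : R, y = y * s * c) /\
  y * a * b = b /\ c * a * y = c.

Definition right_bc_invertible (R : pzRingType) (alpha b c : R) : Prop :=
  exists y : R, (forall r : R, exists t : R, y * r = b * t) /\ c * alpha * y = c.

Definition left_ann (R : pzRingType) (x : R) : R -> Prop := fun r => r * x = 0.

Definition lann_bc_invertible (R : pzRingType) (alpha b c : R) : Prop :=
  exists y : R, (forall r : R, left_ann b r -> left_ann y r) /\ c * alpha * y = c.

Definition right_invertible (R : pzRingType) (x : R) : Prop :=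
  exists z : R, x * z = 1.

From mathcomp Require Import all_boot all_algebra.
Set Implicit Arguments.
Unset Strict Implicit.
Unset Printing Implicit Defensive.

Import GRing.Theory.
Local Open Scope ring_scope.

(** Write [y] for the (b,c)-inverse of [a].  The element [y a] is an
    idempotent in [bR] fixing [b], so both [zR ⊆ bR] and [°b ⊆ °z] say exactly
    [y a z = z]; and since [y ∈ yRc] and [c a y = c], the condition
    [c alpha z = c] says exactly [y alpha z = y].  Such a [z] exists iff
    [1 + y (alpha - a)] is right invertible, and Jacobson's lemma passes
    between [1 + y x] and [1 + x y]. *)

Lemma right_invertible_1addC (R : pzRingType) (x y : R) :
  right_invertible (1 + x * y) -> right_invertible (1 + y * x).
Proof.
case=> w hw; exists (1 - y * w * x); rewrite mulrBr mulr1.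
have comm : (1 + y * x) * y = y * (1 + x * y).
  by rewrite mulrDl mulrDr mul1r mulr1 mulrA.
have -> : (1 + y * x) * (y * w * x) = y * x.
  by rewrite !mulrA comm -(mulrA y) hw mulr1.
by rewrite addrK.
Qed.

Section OuterInverse.
Variables (R : pzRingType) (a alpha y : R).
Hypothesis yay : y * a * y = y.

Let P := 1 - y * a.

Let yaP : y * a * P = 0.
Proof. by rewrite /P mulrBr mulr1 mulrA yay subrr. Qed.

Let Py : P * y = 0.
Proof. by rewrite /P mulrBl mul1r yay subrr. Qed.

Lemma fixed_pair_right_invertible :
  (exists z, y * a * z = z /\ y * alpha * z = y) <->
  right_invertible (1 + y * (alpha - a)).
Proof.
set u := 1 + y * (alpha - a); split.
- case=> z [yaz yalz].
  have u_za : u * (z * a) = y * a.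
    by rewrite /u mulrDl mul1r mulrA mulrBr mulrBl yalz yaz mulrBl addrC subrK.
  have u_P : u * P = P + y * alpha * P.
    by rewrite /u mulrDl mul1r mulrBr mulrBl yaP subr0.
  have u_corr : u * (z * a * (y * alpha * P)) = y * alpha * P.
    by rewrite mulrA u_za !mulrA yay.
  (* [z a] inverts [u] on the range of [y a]; the remaining terms handle [P]. *)
  exists (z * a + P - z * a * (y * alpha * P)).
  by rewrite mulrBr mulrDr u_za u_P u_corr addrA addrK /P addrC subrK.
- case=> w uw.
  have Pu : P * u = P by rewrite /u mulrDr mulr1 mulrA Py mul0r addr0.
  have Pw : P * w = P by rewrite -{1}Pu -mulrA uw mulr1.
  have ya_u : y * a * u = y * alpha.
    by rewrite /u mulrDr mulr1 mulrA yay mulrBr addrC subrK.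
  have yalw : y * alpha * w = y * a by rewrite -ya_u -mulrA uw mulr1.
  exists (w * y); split; last by rewrite mulrA yalw yay.
  apply/eqP; rewrite eq_sym -subr_eq0.
  have -> : w * y - y * a * (w * y) = P * (w * y) by rewrite /P mulrBl mul1r.
  by rewrite mulrA Pw Py.
Qed.

End OuterInverse.

Section BCInverse.
Variables (R : pzRingType) (a b c y alpha : R).
Hypothesis hy : bc_inverse a b c y.

Let yab : y * a * b = b. Proof. by case: hy => _ [_ []]. Qed.
Let cay : c * a * y = c. Proof. by case: hy => _ [_ []]. Qed.

Let ya_bR : exists q, y * a = b * q.
Proof. by case: hy => [[r ->]] _; exists (r * y * a); rewrite !mulrA. Qed.

Lemma bc_inverse_outer : y * a * y = y.
Proof. by case: hy => [[r yE]] _; rewrite {2}yE !mulrA yab -yE. Qed.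

Lemma range_sub_bRP (z : R) :
  (forall r, exists t, z * r = b * t) <-> y * a * z = z.
Proof.
split=> [zbR | yaz r].
- by have [t zE] := zbR 1; rewrite mulr1 in zE; rewrite zE mulrA yab.
- by have [q yaE] := ya_bR; exists (q * z * r); rewrite -[in LHS]yaz yaE !mulrA.
Qed.

Lemma left_ann_subP (z : R) :
  (forall q, left_ann b q -> left_ann z q) <-> y * a * z = z.
Proof.
rewrite /left_ann; split=> [annz | yaz q qb].
- have /annz : (1 - y * a) * b = 0 by rewrite mulrBl mul1r yab subrr.
  by rewrite mulrBl mul1r => /eqP; rewrite subr_eq0 => /eqP.
- by have [t yaE] := ya_bR; rewrite -yaz yaE !mulrA qb !mul0r.
Qed.

Lemma c_alpha_fixedP (z : R) : c * alpha * z = c <-> y * alpha * z = y.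
Proof.
have [_ [[s yE] _]] := hy; split=> fix_z.
- by rewrite {1}yE -!mulrA (mulrA c) fix_z mulrA -yE.
- by rewrite -{1}cay -!mulrA (mulrA y) fix_z mulrA cay.
Qed.

Lemma right_bc_invertibleE :
  right_bc_invertible alpha b c <-> exists z, y * a * z = z /\ y * alpha * z = y.
Proof.
split=> [] [z [zbR fix_z]]; exists z.
- by split; [apply/range_sub_bRP | apply/c_alpha_fixedP].
- by split; [apply/range_sub_bRP | apply/c_alpha_fixedP].
Qed.

Lemma lann_bc_invertibleE :
  lann_bc_invertible alpha b c <-> exists z, y * a * z = z /\ y * alpha * z = y.
Proof.
split=> [] [z [zann fix_z]]; exists z.
- by split; [apply/left_ann_subP | apply/c_alpha_fixedP].
- by split; [apply/left_ann_subP | apply/c_alpha_fixedP].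
Qed.

End BCInverse.

Theorem theorem4p3 (R : pzRingType) (a b c alpha ainv : R) :
  bc_inverse a b c ainv ->
  [/\ (right_bc_invertible alpha b c <-> lann_bc_invertible alpha b c),
      (lann_bc_invertible alpha b c <-> right_invertible (1 + (alpha - a) * ainv)) &
      (right_invertible (1 + (alpha - a) * ainv) <-> right_invertible (1 + ainv * (alpha - a)))].
Proof.
move=> hy.
have jacobson : right_invertible (1 + (alpha - a) * ainv) <->
                right_invertible (1 + ainv * (alpha - a)).
  by split; apply: right_invertible_1addC.
have fixed := fixed_pair_right_invertible alpha (bc_inverse_outer hy).
have rbc := right_bc_invertibleE alpha hy.
have lbc := lann_bc_invertibleE alpha hy.
split; tauto.
Qed.
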